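(* Let $\mathcal V_{r_p}=\{\bm v_1,\ldots,\bm v_{r_p}\}\subset\mathbb R^q$ be the UD skeleton, and let $\mathcal K$ be a reproducing kernel on $[0,1]^q\times[0,1]^q$. Suppose $f:[0,1]^q\to\mathbb R$ has bounded generalized variation $V_2(f,\mathcal K)<\infty$, and define $\phi_f(\bm x)=f(\mathcal T(\bm x))=f\bigl(T_{\bm Z}(\Pi_q(\bm x))\bigr)$ for $\bm x\in\mathbb R^p$. Assume moreover that $\varphi_f(\bm z)=f(T_{\bm Z}(\bm z))$, $\bm z\in\mathbb R^q$, is Lipschitz on $\mathcal Z\cup\mathcal V_{r_p}$ with constant $L_f$, i.e. $|\varphi_f(\bm z)-\varphi_f(\bm z')|\le L_f\|\bm z-\bm z'\|_2$ for all $\bm z,\bm z'\in\mathcal Z\cup\mathcal V_{r_p}$. Then for each $g\in\{0,1\}$, \[ \left|\int \phi_f\,dP_{n,\bm X}-\int\phi_f\,dP_{\mathcal S_g,\bm X}\right|\le D(\mathcal V_{r_p};\mathcal Z,\mathcal K)\,V_2(f,\mathcal K)+L_f\,\delta_g^{(\mathrm{rot})}, \] and consequently \[ \left|\int \phi_f\,dP_{n,\bm X}-\int\phi_f\,dP_{\mathcal S,\bm X}\right|\le D(\mathcal V_{r_p};\mathcal Z,\mathcal K)\,V_2(f,\mathcal K)+\frac{L_f}{2}\bigl(\delta_1^{(\mathrm{rot})}+\delta_0^{(\mathrm{rot})}\bigr). \]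
   Context: Data: $(Y_i,W_i,\bm X_i)$, $i=1,\ldots,n$, with $Y_i\in\mathbb R$, $W_i\in\{0,1\}$, $\bm X_i\in\mathbb R^p$; both treatment arms are nonempty. Let $\bar{\bm X}=n^{-1}\sum_i\bm X_i$, $\widehat{\bm D}$ the diagonal matrix of (positive) sample standard deviations of the $p$ coordinates, $\widetilde{\bm X}_i=\widehat{\bm D}^{-1}(\bm X_i-\bar{\bm X})$, and $\widetilde{\bm X}=\bm U\bm\Sigma\bm V^\top$ the SVD of the $n\times p$ matrix with rows $\widetilde{\bm X}_i^\top$, singular values in decreasing order. For a chosen $q\le p$, $\bm V_q$ is the matrix of the first $q$ columns of $\bm V$, $\Pi_q(\bm x)=\bm V_q^\top\widehat{\bm D}^{-1}(\bm x-\bar{\bm X})$, $\bm Z_i=\Pi_q(\bm X_i)$, $\mathcal Z=\{\bm Z_1,\ldots,\bm Z_n\}$. For $d=1,\ldots,q$, $\widehat F_{Z^{(d)}}$ is the empirical CDF of $\{Z_i^{(d)}\}_{i=1}^n$, $T_{\bm Z}(\bm z)=(\widehat F_{Z^{(1)}}(z^{(1)}),\ldots,\widehat F_{Z^{(q)}}(z^{(q)}))^\top\in[0,1]^q$, and $\mathcal T(\bm x)=T_{\bm Z}(\Pi_q(\bm x))$. The UD skeleton is a set $\mathcal V_{r_p}=\{\bm v_j\}_{j=1}^{r_p}\subset\mathbb R^q$, obtained as $\bm v_j=(\widehat F^{-1}_{Z^{(1)}}(u_{j1}),\ldots,\widehat F^{-1}_{Z^{(q)}}(u_{jq}))^\top$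 from a design $\{\bm u_j\}\subset[0,1]^q$. For $g\in\{0,1\}$ and each $j$, $i_j^g\in\arg\min_{i:W_i=g}\|\bm Z_i-\bm v_j\|_2$; $\mathcal S_g=\{i_j^g\}_{j=1}^{r_p}$, $\mathcal S=\mathcal S_1\cup\mathcal S_0$, and $\delta_g^{(\mathrm{rot})}=\max_{1\le j\le r_p}\|\bm Z_{i_j^g}-\bm v_j\|_2$. Empirical measures: $P_{n,\bm X}=n^{-1}\sum_{i=1}^n\delta_{\bm X_i}$, $P_{\mathcal S_g,\bm X}=r_p^{-1}\sum_{j=1}^{r_p}\delta_{\bm X_{i_j^g}}$, $P_{\mathcal S,\bm X}=\tfrac12P_{\mathcal S_1,\bm X}+\tfrac12P_{\mathcal S_0,\bm X}$. Generalized empirical $F$-discrepancy: for a finite $\mathcal P=\{\bm\xi_1,\ldots,\bm\xi_m\}\subset\mathbb R^q$, $D(\mathcal P;\mathcal Z,\mathcal K)\ge0$ is defined by $D^2=\frac1{n^2}\sum_{i,i'}\mathcal K(T_{\bm Z}(\bm Z_i),T_{\bm Z}(\bm Z_{i'}))-\frac{2}{nm}\sum_{i,k}\mathcal K(T_{\bm Z}(\bm Z_i),T_{\bm Z}(\bm\xi_k))+\frac1{m^2}\sum_{k,k'}\mathcal K(T_{\bm Z}(\bm\xi_k),T_{\bm Z}(\bm\xi_{k'}))$. $V_2(f,\mathcal K)\in[0,\infty]$ denotes the generalized (Hickernell) variation of $f$ with respect to $\mathcal K$; it satisfies the empirical Koksma–Hlawka inequality: for every finite $\mathcal P=\{\bm\xi_k\}_{k=1}^m\subset\mathbb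 R^q$, $\bigl|n^{-1}\sum_i f(T_{\bm Z}(\bm Z_i))-m^{-1}\sum_k f(T_{\bm Z}(\bm\xi_k))\bigr|\le D(\mathcal P;\mathcal Z,\mathcal K)V_2(f,\mathcal K)$. *)

From HB Require Import structures.
From mathcomp Require Import all_boot all_order all_algebra.
From mathcomp Require Import reals.
Set Implicit Arguments. Unset Strict Implicit. Unset Printing Implicit Defensive.
Import Order.TTheory GRing.Theory Num.Theory.
Local Open Scope ring_scope.

Section UDDefs.
Variable R : realType.

Definition mean_row (n p : nat) (X : 'I_n -> 'rV[R]_p) : 'rV[R]_p :=
  n%:R^-1 *: \sum_(i < n) X i.

Definition sample_sd (n p : nat) (X : 'I_n -> 'rV[R]_p) (k : 'I_p) : R :=
  Num.sqrt ((n.-1)%:R^-1 * \sum_(i < n) (X i 0 k - mean_row X 0 k) ^+ 2).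

Definition Dinv (n p : nat) (X : 'I_n -> 'rV[R]_p) : 'M[R]_p :=
  diag_mx (\row_k (sample_sd X k)^-1).

Definition Xtilde (n p : nat) (X : 'I_n -> 'rV[R]_p) : 'M[R]_(n, p) :=
  \matrix_(i < n) ((X i - mean_row X) *m Dinv X).

Definition is_svd (n p : nat) (A : 'M[R]_(n, p)) (U : 'M[R]_n)
    (S : 'M[R]_(n, p)) (V : 'M[R]_p) : Prop :=
  [/\ U^T *m U = 1%:M /\ V^T *m V = 1%:M, A = U *m S *m (V^T),
      (forall (i : 'I_n) (k : 'I_p), (i : nat) <> k -> S i k = 0),
      (forall (i : 'I_n) (k : 'I_p), (i : nat) = k -> 0 <= S i k) &
      (forall (i i' : 'I_n) (k k' : 'I_p), (i : nat) = k -> (i' : nat) = k' ->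
          (i <= i')%N -> S i' k' <= S i k)].

Definition Vq (p q : nat) (hq : (q <= p)%N) (V : 'M[R]_p) : 'M[R]_(p, q) :=
  \matrix_(k < p, d < q) V k (widen_ord hq d).

(* Pi_q(x) = V_q^T \hat D^{-1} (x - \bar X), written on row vectors *)
Definition Piq (n p q : nat) (X : 'I_n -> 'rV[R]_p) (V : 'M[R]_p)
    (hq : (q <= p)%N) (x : 'rV[R]_p) : 'rV[R]_q :=
  (x - mean_row X) *m Dinv X *m Vq hq V.

Definition ecdf (n q : nat) (Z : 'I_n -> 'rV[R]_q) (d : 'I_q) (t : R) : R :=
  #|[set i : 'I_n | Z i 0 d <= t]|%:R / n%:R.

Definition TZ (n q : nat) (Z : 'I_n -> 'rV[R]_q) (z : 'rV[R]_q) : 'rV[R]_q :=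
  \row_d ecdf Z d (z 0 d).

(* t = \hat F^{-1}_{Z^(d)}(u) = inf{ t : F(t) >= u } (attained at a data point) *)
Definition is_emp_quantile (n q : nat) (Z : 'I_n -> 'rV[R]_q) (d : 'I_q)
    (u t : R) : Prop :=
  [/\ exists i, t = Z i 0 d, u <= ecdf Z d t &
      forall i, u <= ecdf Z d (Z i 0 d) -> t <= Z i 0 d].

Definition norm2 (q : nat) (x : 'rV[R]_q) : R :=
  Num.sqrt (\sum_(d < q) x 0 d ^+ 2).

Definition in_unit_cube (q : nat) (x : 'rV[R]_q) : Prop :=
  forall d, 0 <= x 0 d <= 1.

Definition reproducing_kernel (q : nat) (K : 'rV[R]_q -> 'rV[R]_q -> R) : Prop :=
  (forall x y, in_unit_cube x -> in_unit_cube y -> K x y = K y x) /\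
  (forall (m : nat) (x : 'I_m -> 'rV[R]_q) (c : 'I_m -> R),
      (forall k, in_unit_cube (x k)) ->
      0 <= \sum_(k < m) \sum_(k' < m) c k * c k' * K (x k) (x k')).

Definition disc (n q m : nat) (K : 'rV[R]_q -> 'rV[R]_q -> R)
    (Z : 'I_n -> 'rV[R]_q) (xi : 'I_m -> 'rV[R]_q) : R :=
  Num.sqrt (
    (n%:R ^+ 2)^-1 * \sum_(i < n) \sum_(i' < n) K (TZ Z (Z i)) (TZ Z (Z i'))
  - 2 / (n%:R * m%:R) * \sum_(i < n) \sum_(k < m) K (TZ Z (Z i)) (TZ Z (xi k))
  + (m%:R ^+ 2)^-1 * \sum_(k < m) \sum_(k' < m) K (TZ Z (xi k)) (TZ Z (xi k'))).

Definition int_Pn (n p : nat) (X : 'I_n -> 'rV[R]_p) (phi : 'rV[R]_p -> R) : R :=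
  n%:R^-1 * \sum_(i < n) phi (X i).

Definition int_PSg (n p r : nat) (X : 'I_n -> 'rV[R]_p) (ig : bool -> 'I_r -> 'I_n)
    (g : bool) (phi : 'rV[R]_p -> R) : R :=
  r%:R^-1 * \sum_(j < r) phi (X (ig g j)).

Definition int_PS (n p r : nat) (X : 'I_n -> 'rV[R]_p) (ig : bool -> 'I_r -> 'I_n)
    (phi : 'rV[R]_p -> R) : R :=
  2^-1 * int_PSg X ig true phi + 2^-1 * int_PSg X ig false phi.

Definition delta_rot (n q r : nat) (Z : 'I_n -> 'rV[R]_q) (v : 'I_r -> 'rV[R]_q)
    (ig : bool -> 'I_r -> 'I_n) (g : bool) : R :=
  \big[Num.max/0]_(j < r) norm2 (Z (ig g j) - v j).

End UDDefs.

(** The Koksma–Hlawka inequality applied to the skeleton itself bounds the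
    gap between the data average and the skeleton average by [D V_2].
    Replacing each skeleton point [v_j] by its matched unit [Z_(i_j^g)] moves
    each term by at most [L_f |Z_(i_j^g) - v_j| <= L_f delta_g], and the
    triangle inequality adds the two errors; averaging the bounds for both
    arms gives the bound for [P_S].  Only the Koksma–Hlawka and Lipschitz
    hypotheses enter: [delta_g] is measured along the matching actually used. *)
From HB Require Import structures.
From mathcomp Require Import all_boot all_order all_algebra.
From mathcomp Require Import reals.
From mathcomp Require Import lra.
Set Implicit Arguments. Unset Strict Implicit. Unset Printing Implicit Defensive.
Import Order.TTheory GRing.Theory Num.Theory.
Local Open Scope ring_scope.

Section Averages.
Variable R : realFieldType.

Lemma ler_norm_mean (r : nat) (a : 'I_r -> R) (M : R) :
  (0 < r)%N -> (forall j, `|a j| <= M) -> `|r%:R^-1 * \sum_(j < r) a j| <= M.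
Proof.
move=> r_gt0 le_aM; have r_pos : (0 : R) < r%:R by rewrite ltr0n.
rewrite normrM ger0_norm ?invr_ge0 ?ler0n // ler_pdivrMl //.
apply: le_trans (ler_norm_sum _ _ _) _.
by rewrite mulr_natl -[in M *+ _](card_ord r) -sumr_const; apply: ler_sum.
Qed.

(* No sign condition on [L]: for [L < 0] the hypotheses force every [d i]
   to vanish. *)
Lemma normr_le_mul_bigmax (I : finType) (L : R) (a d : I -> R) :
  (forall i, 0 <= d i) -> (forall i, `|a i| <= L * d i) ->
  forall i, `|a i| <= L * \big[Num.max/0]_i d i.
Proof.
move=> d_ge0 le_ad i; have [L_ge0 | L_lt0] := leP 0 L.
  by apply: le_trans (le_ad i) _; rewrite ler_wpM2l // le_bigmax.
have d0 j : d j = 0.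
  apply/eqP; rewrite eq_le d_ge0 andbT.
  by rewrite -(nmulr_rge0 _ L_lt0) (le_trans _ (le_ad j)).
rewrite big1_idem //; last exact: maxxx.
by have := le_ad i; rewrite d0.
Qed.

Lemma norm_sub_midpoint (x y z : R) :
  `|x - (2^-1 * y + 2^-1 * z)| <= 2^-1 * (`|x - y| + `|x - z|).
Proof.
have -> : x - (2^-1 * y + 2^-1 * z) = 2^-1 * (x - y) + 2^-1 * (x - z) by lra.
apply: le_trans (ler_normD _ _) _.
by rewrite !normrM ger0_norm ?invr_ge0 ?ler0n // mulrDr.
Qed.

End Averages.

Lemma mean_matching_error (R : realType) (n q r : nat) (h : 'rV[R]_q -> R)
    (Z : 'I_n -> 'rV[R]_q) (v : 'I_r -> 'rV[R]_q) (ig : bool -> 'I_r -> 'I_n)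
    (g : bool) (L : R) :
  (0 < r)%N ->
  (forall j, `|h (Z (ig g j)) - h (v j)| <= L * norm2 (Z (ig g j) - v j)) ->
  `|r%:R^-1 * \sum_(j < r) h (v j) - r%:R^-1 * \sum_(j < r) h (Z (ig g j))|
    <= L * delta_rot Z v ig g.
Proof.
move=> r_gt0 lip; rewrite -mulrBr -sumrB; apply: ler_norm_mean => //.
apply: (normr_le_mul_bigmax (L := L) (a := fun j => h (v j) - h (Z (ig g j)))).
  by move=> j; apply: sqrtr_ge0.
by move=> j; rewrite distrC.
Qed.

Theorem theorem1 (R : realType) (n p q r : nat)
  (X : 'I_n -> 'rV[R]_p) (W : 'I_n -> bool)
  (hW1 : exists i, W i = true) (hW0 : exists i, W i = false)
  (hsd : forall k : 'I_p, 0 < sample_sd X k)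
  (U : 'M[R]_n) (S : 'M[R]_(n, p)) (V : 'M[R]_p)
  (hsvd : is_svd (Xtilde X) U S V)
  (hq : (q <= p)%N)
  (K : 'rV[R]_q -> 'rV[R]_q -> R) (hK : reproducing_kernel K)
  (hr : (0 < r)%N)
  (u : 'I_r -> 'rV[R]_q) (hu : forall j, in_unit_cube (u j))
  (v : 'I_r -> 'rV[R]_q)
  (hv : forall (j : 'I_r) (d : 'I_q),
      is_emp_quantile (fun i => Piq X V hq (X i)) d (u j 0 d) (v j 0 d))
  (ig : bool -> 'I_r -> 'I_n)
  (hig : forall (g : bool) (j : 'I_r), W (ig g j) = g /\
      forall i, W i = g ->
        norm2 (Piq X V hq (X (ig g j)) - v j) <= norm2 (Piq X V hq (X i) - v j))
  (f : 'rV[R]_q -> R) (V2 : R)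
  (hKH : forall (m : nat) (xi : 'I_m -> 'rV[R]_q), (0 < m)%N ->
      `| n%:R^-1 * \sum_(i < n)
            f (TZ (fun i => Piq X V hq (X i)) (Piq X V hq (X i)))
         - m%:R^-1 * \sum_(k < m) f (TZ (fun i => Piq X V hq (X i)) (xi k)) |
      <= disc K (fun i => Piq X V hq (X i)) xi * V2)
  (Lf : R)
  (hLip : forall z z' : 'rV[R]_q,
      ((exists i, z = Piq X V hq (X i)) \/ (exists j, z = v j)) ->
      ((exists i, z' = Piq X V hq (X i)) \/ (exists j, z' = v j)) ->
      `| f (TZ (fun i => Piq X V hq (X i)) z)
         - f (TZ (fun i => Piq X V hq (X i)) z') | <= Lf * norm2 (z - z')) :
  let Z := fun i => Piq X V hq (X i) in
  let phi := fun x => f (TZ Z (Piq X V hq x)) in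
  (forall g : bool,
     `| int_Pn X phi - int_PSg X ig g phi |
       <= disc K Z v * V2 + Lf * delta_rot Z v ig g) /\
  `| int_Pn X phi - int_PS X ig phi |
     <= disc K Z v * V2
        + Lf / 2 * (delta_rot Z v ig true + delta_rot Z v ig false).
Proof.
move=> Z phi.
pose skeleton_mean := r%:R^-1 * \sum_(j < r) f (TZ Z (v j)).
have arm_bound g : `|int_Pn X phi - int_PSg X ig g phi|
    <= disc K Z v * V2 + Lf * delta_rot Z v ig g.
  apply: le_trans (ler_distD skeleton_mean _ _) _; apply: lerD.
    exact: hKH.
  apply: (mean_matching_error (h := fun z => f (TZ Z z))) => // j.
  by apply: hLip; [left | right]; eexists.
split=> //; apply: le_trans (norm_sub_midpoint _ _ _) _.
by have := arm_bound true; have := arm_bound false; lra.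
Qed.
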